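(* Let $\delta_j,\delta_k$ be coprime integers with $1<\delta_j<\delta_k$, let $r=\delta_k\bmod\delta_j$ and let $f\colon \mathcal B(\delta_j,r)\to\mathcal B(\delta_k,\delta_j)$, $f(x',y')=(y',\,x'-y'\lfloor \delta_k/\delta_j\rfloor)$. Let $(1,y)\in\mathcal B(\delta_k,\delta_j)$. Then $(1,y)\notin f(\mathcal B(\delta_j,r))$ if and only if $-\lfloor\delta_k/\delta_j\rfloor<y\le 0$.
   Context: For coprime positive integers $p,q$ and $i\in\{1,\ldots,\max\{p,q\}\}$, the $\lambda$-B\'ezout couple of $i$ for $(p,q)$ is the unique $(x,y)\in\mathbb Z^2$ with $xp+yq=i$ and $0<y\le p$, and the $\mu$-B\'ezout couple of $i$ for $(p,q)$ is the unique $(x,y)\in\mathbb Z^2$ with $xp+yq=i$ and $0<x\le q$. $\mathcal B(p,q)$ denotes the set of all $\lambda$- and $\mu$-B\'ezout couples for $(p,q)$ (for all such $i$). The map $f$ takes values in $\mathcal B(\delta_k,\delta_j)$. *)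

From HB Require Import structures.
From mathcomp Require Import all_boot all_order all_algebra.
Set Implicit Arguments. Unset Strict Implicit. Unset Printing Implicit Defensive.
Import Order.TTheory GRing.Theory Num.Theory.
Local Open Scope ring_scope.

Definition lambda_couple (p q i : int) (c : int * int) : Prop :=
  c.1 * p + c.2 * q = i /\ 0 < c.2 <= p.

Definition mu_couple (p q i : int) (c : int * int) : Prop :=
  c.1 * p + c.2 * q = i /\ 0 < c.1 <= q.

Definition bezout_set (p q : int) (c : int * int) : Prop :=
  exists i : int, 1 <= i <= Num.max p q /\ (lambda_couple p q i c \/ mu_couple p q i c).

Definition fmap (dj dk : nat) (c : int * int) : int * int :=
  (c.2, c.1 - c.2 * ((dk %/ dj)%N)%:Z).

(* Write [dk = q dj + r] with [0 < r < dj] (coprimality excludes [r = 0]).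
   A couple [(1, y)] of [B(dk, dj)] represents [dk + y dj = (q + y) dj + r]
   in [1, dk], which forces [-q <= y <= 0]. The only candidate preimage of
   [(1, y)] under [f] is [(q + y, 1)], representing [(q + y) dj + r]; it lies
   in [B(dj, r)] exactly when this number is at most [dj], i.e. when
   [y = -q]. *)
From HB Require Import structures.
From mathcomp Require Import all_boot all_order all_algebra.
From mathcomp Require Import zify.
Import Order.TTheory GRing.Theory Num.Theory.
Local Open Scope ring_scope.

Lemma bezout_set_sum (p q : int) (c : int * int) :
  bezout_set p q c -> 1 <= c.1 * p + c.2 * q <= Num.max p q.
Proof. by case=> i [hi [[-> _] | [-> _]]]. Qed.

Lemma bezout_set_lambda (p q : int) (c : int * int) :
  0 < c.2 <= p -> 1 <= c.1 * p + c.2 * q <= Num.max p q -> bezout_set p q c.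
Proof. by move=> hc hi; exists (c.1 * p + c.2 * q); split=> //; left. Qed.

Lemma bezout_set_mu (p q : int) (c : int * int) :
  0 < c.1 <= q -> 1 <= c.1 * p + c.2 * q <= Num.max p q -> bezout_set p q c.
Proof. by move=> hc hi; exists (c.1 * p + c.2 * q); split=> //; right. Qed.

Lemma bezout_set_second1 (p q x : int) :
  0 < p -> bezout_set p q (x, 1) <-> 1 <= x * p + q <= Num.max p q.
Proof.
move=> p_gt0; rewrite -[q in _ + q]mul1r; split; first exact: bezout_set_sum.
by apply: (@bezout_set_lambda _ _ (x, 1)); rewrite /= -gtz0_ge1.
Qed.

Lemma bezout_set_first1 (p q y : int) :
  0 < q -> bezout_set p q (1, y) <-> 1 <= p + y * q <= Num.max p q.
Proof.
move=> q_gt0; rewrite -[p in p + _]mul1r; split; first exact: bezout_set_sum.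
by apply: (@bezout_set_mu _ _ (1, y)); rewrite /= -gtz0_ge1.
Qed.

Lemma euclid_shift_range (q d r y : int) : 0 < r < d ->
  (1 <= (q * d + r) + y * d <= q * d + r) = (- q <= y <= 0).
Proof. by move=> /andP[? ?]; apply/andP/andP => -[? ?]; split; nia. Qed.

Lemma euclid_unit_range (a d r : int) : 0 < r < d ->
  (1 <= a * d + r <= d) = (a == 0).
Proof. by move=> /andP[? ?]; apply/andP/eqP => [[? ?] | ->]; [nia | lia]. Qed.

Lemma modn_gt0_coprime (m n : nat) : (1 < n)%N -> coprime n m -> (0 < m %% n)%N.
Proof.
move=> n_gt1; rewrite lt0n /coprime gcdnC -gcdn_modl.
by apply: contraTneq => ->; rewrite gcd0n neq_ltn n_gt1 orbT.
Qed.

Lemma fmap_eq_first1 (dj dk : nat) (c : int * int) (y : int) :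
  fmap dj dk c = (1, y) <-> c = (y + (dk %/ dj)%N%:Z, 1).
Proof.
case: c => a b; rewrite /fmap /=; split=> [[-> <-] | [-> ->]].
  by rewrite mul1r subrK.
by rewrite mul1r addrK.
Qed.

Theorem proposition3p7 (dj dk : nat) (hcop : coprime dj dk)
    (h1 : (1 < dj)%N) (h2 : (dj < dk)%N) (y : int)
    (hy : bezout_set dk%:Z dj%:Z (1, y)) :
  (~ exists c : int * int,
        bezout_set dj%:Z ((dk %% dj)%N)%:Z c /\ fmap dj dk c = (1, y))
  <-> (- ((dk %/ dj)%N)%:Z < y <= 0).
Proof.
set q := (dk %/ dj)%N; set r := (dk %% dj)%N.
have r_bounds : 0 < r%:Z < dj%:Z.
  by apply/andP; split; rewrite ltz_nat ?modn_gt0_coprime ?ltn_pmod //; lia.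
have dkE : dk%:Z = q%:Z * dj%:Z + r%:Z by rewrite {1}(divn_eq dk dj); lia.
have dj_gt0 : 0 < dj%:Z by lia.
have max_dk : Num.max dk%:Z dj%:Z = dk%:Z by rewrite max_l //; lia.
have max_dj : Num.max dj%:Z r%:Z = dj%:Z by rewrite max_l // ltW; case/andP: r_bounds.
have /andP[y_geq y_le0] : - q%:Z <= y <= 0.
  move/(bezout_set_first1 _ _ _ dj_gt0): hy.
  by rewrite max_dk dkE euclid_shift_range.
have preimageP : (exists c, bezout_set dj%:Z r%:Z c /\ fmap dj dk c = (1, y))
                 <-> y = - q%:Z.
  have unit_rangeE a : bezout_set dj%:Z r%:Z (a, 1) <-> a = 0.
    by rewrite bezout_set_second1 // max_dj euclid_unit_range //; split=> /eqP.
  split=> [[c [hc /fmap_eq_first1 cE]] | yE].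
    by move: hc; rewrite cE unit_rangeE => /eqP; rewrite addr_eq0 => /eqP.
  by exists (y + q%:Z, 1); rewrite fmap_eq_first1 unit_rangeE yE addNr.
rewrite y_le0 andbT lt_def y_geq andbT.
split=> [hn | hne /preimageP yE]; first by apply/eqP => /preimageP/hn.
by rewrite yE eqxx in hne.
Qed.
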